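(* Let $M_n=S_n\rtimes S_n$ be the semidirect product in which the second factor acts on the first (normal) factor by conjugation. Let $s_i$ denote the transposition $(i\ i{+}1)$ in the first factor and $t_i$ the transposition $(i\ i{+}1)$ in the second factor, $i=1,\dots,n-1$. Then $M_n$ admits the presentation with generators $s_i,t_i$ ($i=1,\dots,n-1$) and relations: $t_i^2=s_i^2=1$ ($1\le i\le n-1$); $s_is_j=s_js_i$ and $t_it_j=t_jt_i$ ($|i-j|\geq2$); $s_is_{i+1}s_i=s_{i+1}s_is_{i+1}$ and $t_it_{i+1}t_i=t_{i+1}t_it_{i+1}$ ($1\le i\le n-2$); $t_is_jt_i=s_j$ ($|i-j|\geq 2$); $t_is_it_i=s_i$ ($1\le i\le n-1$); $t_{i+1}s_it_{i+1}=s_{i+1}s_is_{i+1}$ ($1\le i\le n-2$); $t_{i-1}s_it_{i-1}=s_{i-1}s_is_{i-1}$ ($2\le i\le n-1$). *)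

From HB Require Import structures.
From mathcomp Require Import all_boot all_fingroup.
Set Implicit Arguments. Unset Strict Implicit. Unset Printing Implicit Defensive.
Local Open Scope group_scope.

(* Adjacent transposition (i i+1) of {0,..,n-1} (0-based: s_(i+1) of the paper);
   only used for i.+1 < n, where it is the genuine transposition. *)
Definition adjT (n i : nat) : 'S_n :=
  match n return 'S_n with
  | 0 => 1
  | m.+1 => tperm (inord i : 'I_m.+1) (inord i.+1)
  end.

Definition Mn (n : nat) := sdprod_by (conjg_groupAction (perm_of 'I_n)).

(* s_i and t_i (0-based index i, i.e. the paper's s_(i+1), t_(i+1)). *)
Definition sgen (n i : nat) : Mn n := sdpair1 (conjg_groupAction (perm_of 'I_n)) (adjT n i).
Definition tgen (n i : nat) : Mn n := sdpair2 (conjg_groupAction (perm_of 'I_n)) (adjT n i).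

Definition far (i j : nat) : bool := (i.+2 <= j) || (j.+2 <= i).

Definition Mrels (G : groupType) (n : nat) (s t : nat -> G) : Prop :=
  (forall i, i < n.-1 -> t i * t i = 1 /\ s i * s i = 1) /\
  (forall i j, i < n.-1 -> j < n.-1 -> far i j ->
        s i * s j = s j * s i /\ t i * t j = t j * t i) /\
  (forall i, i.+1 < n.-1 ->
        s i * s i.+1 * s i = s i.+1 * s i * s i.+1 /\
        t i * t i.+1 * t i = t i.+1 * t i * t i.+1) /\
  (forall i j, i < n.-1 -> j < n.-1 -> far i j -> t i * s j * t i = s j) /\
  (forall i, i < n.-1 -> t i * s i * t i = s i) /\
  (forall i, i.+1 < n.-1 -> t i.+1 * s i * t i.+1 = s i.+1 * s i * s i.+1) /\
  (forall i, 0 < i -> i < n.-1 -> t i.-1 * s i * t i.-1 = s i.-1 * s i * s i.-1).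

(* (G; s, t) is presented by the relations Mrels: the relations hold, G is
   generated by the s_i, t_i, and for every group H and every family (a, b)
   in H satisfying the relations there is a homomorphism G -> H sending
   s_i to a_i and t_i to b_i (unique by generation). *)
Definition is_presentation (G : finGroupType) (n : nat) (s t : nat -> G) : Prop :=
  [/\ Mrels n s t,
      <<[set s i | i : 'I_n.-1] :|: [set t i | i : 'I_n.-1]>> = [set: G] &
      forall (H : groupType) (a b : nat -> H), Mrels n a b ->
        exists f : G -> H, {morph f : x y / x * y} /\
          (forall i, i < n.-1 -> f (s i) = a i /\ f (t i) = b i)].

From HB Require Import structures.
From mathcomp Require Import all_boot all_fingroup zify.
Set Implicit Arguments. Unset Strict Implicit. Unset Printing Implicit Defensive.
Local Open Scope group_scope.

(* The mixed relations say exactly that t_i acts on the s_j by conjugation as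
   s_i does (Mrels_coxeterP).  Given families a, b in a group H satisfying the
   relations, a and b both satisfy the Coxeter relations of S_n, so by the
   Coxeter presentation of S_n they induce morphisms phi_a, phi_b from S_n to
   H.  Conjugation by phi_b g and by phi_a g agree on the image of phi_a, which
   is what makes t(g) s(h) |-> phi_b g * phi_a h a morphism on M_n.
   The Coxeter presentation of S_n is proved with normal forms: the relations
   rewrite any word into a product of descending runs, one per level, and the
   level-p run is read off the permutation as the image of the point p. *)

Definition coxeterA (H : groupType) (N : nat) (a : nat -> H) : Prop :=
  [/\ forall i, i < N -> a i * a i = 1,
      forall i j, i < N -> j < N -> far i j -> a i * a j = a j * a i &
      forall i, i.+1 < N -> a i * a i.+1 * a i = a i.+1 * a i * a i.+1].

Lemma farC i j : far i j = far j i.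
Proof. by rewrite /far orbC. Qed.

Lemma rev_iotaSr k l : rev (iota k l.+1) = k + l :: rev (iota k l).
Proof. by rewrite -addn1 iotaD rev_cat. Qed.

Lemma rev_iotaSl k l : rev (iota k l.+1) = rcons (rev (iota k.+1 l)) k.
Proof. exact: rev_cons. Qed.

Lemma mem_rev_iota k l j : (j \in rev (iota k l)) = (k <= j < k + l).
Proof. by rewrite mem_rev mem_iota. Qed.

(* A code [:: l_N; ...; l_1] with l_p <= p stands for the word whose p-th
   block is the descending run s_(p-1) ... s_(p-l_p); these words are the
   normal forms of the Coxeter presentation of S_(N+1). *)
Fixpoint code_word (ks : seq nat) : seq nat :=
  if ks is l :: ks' then code_word ks' ++ rev (iota ((size ks').+1 - l) l)
  else [::].

Lemma code_word_cons l ks :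
  code_word (l :: ks) = code_word ks ++ rev (iota ((size ks).+1 - l) l).
Proof. by []. Qed.

Fixpoint is_code (ks : seq nat) : bool :=
  if ks is l :: ks' then (l <= (size ks').+1) && is_code ks' else true.

(* The code of the normal form of (code_word ks ++ [:: i]). *)
Fixpoint code_ins (ks : seq nat) (i : nat) : seq nat :=
  if ks is l :: ks' then
    let k := (size ks').+1 - l in
    if i.+1 == k then l.+1 :: ks'
    else if i == k then l.-1 :: ks'
    else if k < i then l :: code_ins ks' i.-1
    else l :: code_ins ks' i
  else [::].

Definition code_of (N : nat) (w : seq nat) : seq nat := foldl code_ins (nseq N 0) w.

Lemma size_code_ins ks i : size (code_ins ks i) = size ks.
Proof.
elim: ks i => [|l ks IH] i //=.
by case: ifP => // _; case: ifP => // _; case: ifP => _ /=; rewrite IH.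
Qed.

Lemma is_code_ins ks i : is_code ks -> i < size ks -> is_code (code_ins ks i).
Proof.
elim: ks i => [|l ks IH] i //= /andP[hl hks] hi.
case: ifP => [/eqP hik|hik]; first by rewrite /= hks andbT; lia.
case: ifP => [_|hik']; first by rewrite /= hks andbT; lia.
by case: ifP => hki; rewrite /= size_code_ins hl IH //; lia.
Qed.

Lemma code_word_lt ks : is_code ks -> all (gtn (size ks)) (code_word ks).
Proof.
elim: ks => [|l ks IH] //= /andP[hl hks]; rewrite all_cat.
apply/andP; split; first by apply: sub_all (IH hks) => j /=; lia.
by apply/allP => j; rewrite mem_rev_iota /=; lia.
Qed.

Lemma code_word_nseq0 N : code_word (nseq N 0) = [::].
Proof. by elim: N => //= N ->. Qed.

Lemma size_code_of N w : size (code_of N w) = N.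
Proof.
by elim/last_ind: w => [|w i IH]; rewrite /code_of ?foldl_rcons ?size_code_ins ?size_nseq.
Qed.

Lemma is_code_of N w : all (gtn N) w -> is_code (code_of N w).
Proof.
elim/last_ind: w => [|w i IH]; first by rewrite /code_of /=; elim: N => //= N ->.
rewrite all_rcons => /andP[hi hw]; rewrite /code_of foldl_rcons.
by apply: is_code_ins; [exact: IH | rewrite size_code_of].
Qed.

Section CoxeterWords.
Variables (H : groupType) (N : nat) (a : nat -> H).
Hypothesis coxA : coxeterA N a.
Local Notation prodw w := (\prod_(i <- w) a i).

Lemma commute_prod_far i w : i < N -> all (fun j => (j < N) && far i j) w ->
  commute (a i) (prodw w).
Proof.
have [_ aC _] := coxA.
move=> hi hw; rewrite big_seq; apply: commute_prod => j /(allP hw)/andP[hj hij].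
exact: aC.
Qed.

Lemma prod_run_shift k l j : k <= j -> j.+2 <= k + l -> k + l <= N ->
  prodw (rev (iota k l)) * a j.+1 = a j * prodw (rev (iota k l)).
Proof.
have [_ aC aB] := coxA.
elim: l => [|l IH] hkj hjl hlN; first by lia.
rewrite rev_iotaSr big_cons.
have [hlt|hge] := ltnP j.+2 (k + l).+1.
  rewrite -mulgA IH; try lia.
  by rewrite !mulgA aC //; rewrite /far; lia.
case: l IH hjl hlN hge => [|l] _ hjl hlN hge; first by lia.
have ->: k + l.+1 = j.+1 by lia.
rewrite rev_iotaSr big_cons (_ : k + l = j); last by lia.
have hR : commute (a j.+1) (prodw (rev (iota k l))).
  by apply: commute_prod_far; [lia | apply/allP => x; rewrite mem_rev_iota /far; lia].
by rewrite -!mulgA -hR !mulgA aB //; lia.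
Qed.

Lemma prod_code_ins ks i : is_code ks -> size ks <= N -> i < size ks ->
  prodw (code_word ks) * a i = prodw (code_word (code_ins ks i)).
Proof.
have [a2 _ _] := coxA.
elim: ks i => [|l ks IH] i //= /andP[hl hks] hN hi.
set k := (size ks).+1 - l; rewrite big_cat -mulgA.
case: ifP => [/eqP hik|hik].
  rewrite /= big_cat (_ : (size ks).+1 - l.+1 = i); last by lia.
  by rewrite rev_iotaSl -cats1 big_cat big_seq1 hik.
case: ifP => [/eqP hik'|hik'].
  case: l hl @k hik hik' => [|l] hl k hik hik'; first by lia.
  rewrite /= big_cat (_ : (size ks).+1 - l = k.+1); last by lia.
  by rewrite rev_iotaSl -cats1 big_cat big_seq1 -mulgA hik' a2 ?mulg1 //; lia.
case: ifP => hki; rewrite /= big_cat size_code_ins -/k -IH //; try lia.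
  case: i hi hik hik' hki => [|i] hi hik hik' hki; first by lia.
  by rewrite prod_run_shift ?mulgA //; lia.
rewrite -(commute_prod_far (i := i)) ?mulgA //; first by lia.
by apply/allP => x; rewrite mem_rev_iota /far; lia.
Qed.

Lemma prod_code_of w : all (gtn N) w -> prodw w = prodw (code_word (code_of N w)).
Proof.
elim/last_ind: w => [|w i IH].
  by rewrite /code_of /= code_word_nseq0.
rewrite all_rcons => /andP[hi hw].
rewrite /code_of foldl_rcons -prod_code_ins -/(code_of N w) -?IH ?size_code_of //.
- by rewrite -cats1 big_cat big_seq1.
- exact: is_code_of.
Qed.

End CoxeterWords.

Section SymmetricGroup.
Variable m : nat.
Local Notation permw w := (\prod_(i <- w) adjT m.+1 i).

Lemma inord_eq x y : x <= m -> y <= m -> (inord x == inord y :> 'I_m.+1) = (x == y).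
Proof.
move=> hx hy; apply/eqP/eqP => [|-> //].
by move/(congr1 (@nat_of_ord _)); rewrite !inordK.
Qed.

Lemma adjT_l i : adjT m.+1 i (inord i) = inord i.+1.
Proof. exact: tpermL. Qed.

Lemma adjT_r i : adjT m.+1 i (inord i.+1) = inord i.
Proof. exact: tpermR. Qed.

Lemma adjT_fix i x : i < m -> x <= m -> x != i -> x != i.+1 ->
  adjT m.+1 i (inord x) = inord x.
Proof.
by move=> hi hx hxi hxi1; rewrite /adjT tpermD // inord_eq //; lia.
Qed.

Lemma mulg_adjT_conj i s : adjT m.+1 i * s * adjT m.+1 i = s ^ adjT m.+1 i.
Proof. by rewrite conjgE tpermV mulgA. Qed.

Lemma adjT_conj_far i j : i < m -> j < m -> far i j ->
  adjT m.+1 j ^ adjT m.+1 i = adjT m.+1 j.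
Proof.
by move=> hi hj hij; rewrite {1}/adjT tpermJ !adjT_fix //; move: hij; rewrite /far; lia.
Qed.

Lemma coxeterA_adjT : coxeterA m (adjT m.+1).
Proof.
split=> [i _|i j hi hj hij|i hi]; first exact: tperm2.
  by rewrite conjgC adjT_conj_far // farC.
rewrite !mulg_adjT_conj {1 3}/adjT !tpermJ adjT_l adjT_r !adjT_fix //; lia.
Qed.

Lemma permw_fix w x : x <= m -> all (fun j => j.+1 < x) w ->
  permw w (inord x) = inord x.
Proof.
move=> hx; elim: w => [|j w IH] /= => [_|/andP[hj hw]]; first by rewrite big_nil perm1.
by rewrite big_cons permM adjT_fix ?IH //; lia.
Qed.

Lemma permw_run k l : k + l <= m -> permw (rev (iota k l)) (inord (k + l)) = inord k.
Proof.
elim: l => [|l IH] hl; first by rewrite big_nil perm1 addn0.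
by rewrite rev_iotaSr big_cons permM addnS adjT_r IH //; lia.
Qed.

Lemma code_word_inj ks1 ks2 : is_code ks1 -> is_code ks2 ->
  size ks1 = size ks2 -> size ks1 <= m ->
  permw (code_word ks1) = permw (code_word ks2) -> ks1 = ks2.
Proof.
elim: ks1 ks2 => [|l1 ks1 IH] [|l2 ks2] // /andP[hl1 hks1] /andP[hl2 hks2] [hs] hm.
rewrite !code_word_cons -hs !big_cat in hl2 * => he.
set p := (size ks1).+1 in hl1 hl2 he; have {}hm : p <= m := hm.
have fix_p ks : is_code ks -> size ks = size ks1 ->
    permw (code_word ks) (inord p) = inord p.
  move=> hks eks; apply: permw_fix => //.
  by apply: sub_all (code_word_lt hks) => j /=; lia.
have run_p l : l <= p -> permw (rev (iota (p - l) l)) (inord p) = inord (p - l).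
  by move=> hl; rewrite -{2}(subnK hl) permw_run //; lia.
have el : l1 = l2.
  have := congr1 (fun s : 'S_m.+1 => s (inord p)) he.
  by rewrite !permM !fix_p // !run_p // => /eqP; rewrite inord_eq; lia.
by rewrite -el in he *; rewrite (IH ks2) //; [lia | exact: mulIg he].
Qed.

Lemma tperm_word i j : i < j <= m ->
  exists2 w, all (gtn m) w & permw w = tperm (inord i) (inord j).
Proof.
elim: j => // j IH /andP[hij hjm].
have [<-|hij'] := eqVneq i j; first by exists [:: i]; rewrite /= ?big_seq1 //; lia.
have [w hw ew] := IH ltac:(lia).
exists (j :: w ++ [:: j]); first by rewrite /= all_cat hw /=; lia.
rewrite big_cons big_cat big_seq1 ew mulgA mulg_adjT_conj.
by rewrite tpermJ adjT_l adjT_fix //; lia.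
Qed.

Lemma perm_word s : exists w, all (gtn m) w && (permw w == s).
Proof.
have [ts -> _] := prod_tpermP s.
elim: ts => [|[x y] ts [w /andP[hw /eqP ew]]]; first by exists [::]; rewrite !big_nil eqxx.
suff [v hv ev] : exists2 v, all (gtn m) v & permw v = tperm x y.
  by exists (v ++ w); rewrite all_cat hv hw big_cat big_cons ev ew eqxx.
wlog hxy : x y / x <= y.
  by move=> gen; case: (leqP x y) => [/gen //|/ltnW/gen]; rewrite tpermC.
have [<-|hxy'] := eqVneq x y; first by exists [::] => //; rewrite big_nil tperm1.
have lt_xy : x < y by rewrite ltn_neqAle hxy andbT (inj_eq val_inj).
have [|v hv ev] := @tperm_word x y; first by rewrite lt_xy -ltnS ltn_ord.
by exists v; rewrite // ev !inord_val.
Qed.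

Definition word_of s : seq nat := xchoose (perm_word s).

Lemma word_of_gtn s : all (gtn m) (word_of s).
Proof. by case/andP: (xchooseP (perm_word s)). Qed.

Lemma word_ofK s : permw (word_of s) = s.
Proof. by case/andP: (xchooseP (perm_word s)) => _ /eqP. Qed.

Definition sym_morph (H : groupType) (a : nat -> H) (s : 'S_m.+1) : H :=
  \prod_(i <- word_of s) a i.

Section SymMorph.
Variables (H : groupType) (a : nat -> H).
Hypothesis coxA : coxeterA m a.
Local Notation prodw w := (\prod_(i <- w) a i).

Lemma coxeterA_prod_eq w1 w2 : all (gtn m) w1 -> all (gtn m) w2 ->
  permw w1 = permw w2 -> prodw w1 = prodw w2.
Proof.
move=> h1 h2; rewrite (prod_code_of coxA h1) (prod_code_of coxA h2).
rewrite (prod_code_of coxeterA_adjT h1) (prod_code_of coxeterA_adjT h2).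
by move/code_word_inj => -> //; rewrite ?is_code_of ?size_code_of.
Qed.

Lemma sym_morph_prod w : all (gtn m) w -> sym_morph a (permw w) = prodw w.
Proof.
by move=> hw; apply: coxeterA_prod_eq; rewrite ?word_of_gtn ?word_ofK.
Qed.

Lemma sym_morphM : {morph sym_morph a : s t / s * t}.
Proof.
move=> s t; rewrite -{1}(word_ofK s) -{1}(word_ofK t) -big_cat.
by rewrite sym_morph_prod ?all_cat ?word_of_gtn // big_cat.
Qed.

Lemma sym_morph1 : sym_morph a 1 = 1.
Proof. by have := @sym_morph_prod [::]; rewrite !big_nil; apply. Qed.

Lemma sym_morphJ : {morph sym_morph a : s t / s ^ t}.
Proof.
have morphV t : sym_morph a t^-1 = (sym_morph a t)^-1.
  by apply/esym/mulg1_eq; rewrite -sym_morphM mulgV sym_morph1.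
by move=> s t; rewrite !conjgE !sym_morphM morphV.
Qed.

Lemma sym_morph_adjT i : i < m -> sym_morph a (adjT m.+1 i) = a i.
Proof. by move=> hi; have := @sym_morph_prod [:: i]; rewrite !big_seq1 /= hi; apply. Qed.

End SymMorph.
End SymmetricGroup.

Lemma coxeterA_morph (G H : groupType) (f : G -> H) N (a : nat -> G) :
  f 1 = 1 -> {morph f : x y / x * y} -> coxeterA N a -> coxeterA N (fun i => f (a i)).
Proof.
move=> f1 fM [a2 aC aB]; split=> [i hi|i j hi hj hij|i hi] /=; rewrite -!fM.
- by rewrite a2.
- by rewrite aC.
- by rewrite aB.
Qed.

Lemma coxeterA_conj_far (H : groupType) N (a : nat -> H) i j :
  coxeterA N a -> i < N -> j < N -> far i j -> a i * a j * a i = a j.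
Proof. by case=> a2 aC _ hi hj hij; rewrite aC // -mulgA a2 // mulg1. Qed.

Lemma Mrels_coxeterP (H : groupType) n (s t : nat -> H) :
  Mrels n s t <->
  [/\ coxeterA n.-1 s, coxeterA n.-1 t &
      forall i j, i < n.-1 -> j < n.-1 -> t i * s j * t i = s i * s j * s i].
Proof.
split=> [[r2 [rC [rB [rfar [req [rup rdown]]]]]]|[coxs coxt rts]].
  have coxs : coxeterA n.-1 s by split=> [i /r2[]|i j hi hj /(rC i j hi hj)[]|i /rB[]].
  have coxt : coxeterA n.-1 t by split=> [i /r2[]|i j hi hj /(rC i j hi hj)[]|i /rB[]].
  split=> // i j hi hj; have [hij|] := boolP (far i j).
    by rewrite rfar // (coxeterA_conj_far coxs).
  rewrite /far => near; case: (ltngtP i j) => [lt_ij|gt_ij|<-].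
  - by rewrite (_ : i = j.-1); [apply: rdown | ]; lia.
  - by rewrite (_ : i = j.+1); [apply: rup | ]; lia.
  - by have [s2 _ _] := coxs; rewrite req // -mulgA s2 // mulg1.
have [s2 sC sB] := coxs; have [t2 tC tB] := coxt.
split; first by move=> i hi; split; [exact: t2 | exact: s2].
split; first by move=> i j hi hj hij; split; [exact: sC | exact: tC].
split; first by move=> i hi; split; [exact: sB | exact: tB].
split; first by move=> i j hi hj hij; rewrite rts // (coxeterA_conj_far coxs).
split; first by move=> i hi; rewrite rts // s2 // mul1g.
split; first by move=> i hi; rewrite rts //; lia.
by move=> i hi0 hi; rewrite rts //; lia.
Qed.

Lemma mem_gen_prod (gT : finGroupType) (X : {set gT}) (g : nat -> gT) N w :
  all (gtn N) w -> (forall i, i < N -> g i \in X) -> \prod_(i <- w) g i \in <<X>>.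
Proof.
move=> hw gX; rewrite big_seq group_prod // => i /(allP hw) hi.
by rewrite mem_gen ?gX.
Qed.

Section SemidirectProduct.
Variable m : nat.
Local Notation to := (conjg_groupAction (perm_of 'I_m.+1)).

Lemma sdpair1M : {morph sdpair1 to : x y / x * y}.
Proof. by move=> x y; apply: sdpair1_morphM; rewrite inE. Qed.

Lemma sdpair2M : {morph sdpair2 to : x y / x * y}.
Proof. by move=> x y; apply: sdpair2_morphM; rewrite inE. Qed.

Lemma sdpair1E x : pair_of_sd (sdpair1 to x) = (1, x).
Proof. by rewrite /sdpair1 val_insubd inE !in_setT. Qed.

Lemma sdpair2E x : pair_of_sd (sdpair2 to x) = (x, 1).
Proof. by rewrite /sdpair2 val_insubd inE !in_setT. Qed.

Lemma tgen_sgen_tgen i j :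
  tgen m.+1 i * sgen m.+1 j * tgen m.+1 i = sgen m.+1 i * sgen m.+1 j * sgen m.+1 i.
Proof.
have tV : (tgen m.+1 i)^-1 = tgen m.+1 i.
  by apply: mulg1_eq; rewrite -sdpair2M tperm2 morph1.
rewrite -{1}tV -mulgA -conjgE /sgen -sdpair_act ?inE //= -mulg_adjT_conj.
by rewrite !sdpair1M.
Qed.

Lemma Mrels_Mn : Mrels m.+1 (sgen m.+1) (tgen m.+1).
Proof.
apply/Mrels_coxeterP; split=> [||i j _ _]; last exact: tgen_sgen_tgen.
- exact: (coxeterA_morph (morph1 (sdpair1 to)) sdpair1M (coxeterA_adjT m)).
- exact: (coxeterA_morph (morph1 (sdpair2 to)) sdpair2M (coxeterA_adjT m)).
Qed.

Lemma Mn_generated :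
  <<[set sgen m.+1 i | i : 'I_m] :|: [set tgen m.+1 i | i : 'I_m]>> = [set: Mn m.+1].
Proof.
apply/eqP; rewrite eqEsubset subsetT /=; apply/subsetP => u _.
rewrite [u]sdpairE -(word_ofK u.1) -(word_ofK u.2) !morph_prod ?inE //.
rewrite groupM // (mem_gen_prod (N := m)) ?word_of_gtn // => i hi.
  by rewrite inE orbC (imset_f _ (_ : Ordinal hi \in _)).
by rewrite inE (imset_f _ (_ : Ordinal hi \in _)).
Qed.

Section UniversalProperty.
Variables (H : groupType) (a b : nat -> H).
Hypothesis rels : Mrels m.+1 a b.

Let coxa : coxeterA m a. Proof. by case/Mrels_coxeterP: rels. Qed.
Let coxb : coxeterA m b. Proof. by case/Mrels_coxeterP: rels. Qed.
Let rts i j : i < m -> j < m -> b i * a j * b i = a i * a j * a i.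
Proof. by case/Mrels_coxeterP: rels => _ _; apply. Qed.

Lemma conjg_prod_ba v w : all (gtn m) v -> all (gtn m) w ->
  (\prod_(j <- v) a j) ^ (\prod_(i <- w) b i) = (\prod_(j <- v) a j) ^ (\prod_(i <- w) a i).
Proof.
have [a2 _ _] := coxa; have [b2 _ _] := coxb.
elim: w v => [|i w IH] v hv; first by rewrite !big_nil !conjg1.
move=> /andP[hi hw]; rewrite !big_cons !conjgM.
have -> : (\prod_(j <- v) a j) ^ b i = (\prod_(j <- v) a j) ^ a i.
  rewrite !conjg_prod big_seq [RHS]big_seq; apply: eq_bigr => j /(allP hv) hj.
  by rewrite !conjgE (mulg1_eq (a2 i hi)) (mulg1_eq (b2 i hi)) !mulgA rts.
have -> : (\prod_(j <- v) a j) ^ a i = \prod_(j <- i :: v ++ [:: i]) a j.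
  by rewrite big_cons big_cat big_seq1 conjgE (mulg1_eq (a2 i hi)) mulgA.
by rewrite IH //= all_cat hv /= [_ < m]hi.
Qed.

Lemma Mn_universal : exists f : Mn m.+1 -> H, {morph f : x y / x * y} /\
  (forall i, i < m.+1.-1 -> f (sgen m.+1 i) = a i /\ f (tgen m.+1 i) = b i).
Proof.
exists (fun u => sym_morph b u.1 * sym_morph a u.2); split=> [u v|i hi] /=.
  change (u * v).1 with (u.1 * v.1); change (u * v).2 with (u.2 ^ v.1 * v.2).
  rewrite (sym_morphM coxb) (sym_morphM coxa) (sym_morphJ coxa).
  rewrite -[sym_morph a u.2 ^ _]conjg_prod_ba ?word_of_gtn //.
  by rewrite conjgE !mulgA mulgK.
rewrite /sgen /tgen !sdpair1E !sdpair2E /= !sym_morph1 // !sym_morph_adjT //.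
by rewrite mul1g mulg1.
Qed.
End UniversalProperty.
End SemidirectProduct.

Lemma is_presentation_M0 : is_presentation 0 (sgen 0) (tgen 0).
Proof.
split=> [||H a b _].
- by do !split.
- apply/eqP; rewrite eqEsubset subsetT /=; apply/subsetP => u _.
  by rewrite [u]sdpairE !permS0 !morph1 mulg1 group1.
- by exists (fun _ => 1); split=> [x y|]; rewrite ?mulg1.
Qed.

Theorem proposition7p2 (n : nat) : is_presentation n (sgen n) (tgen n).
Proof.
case: n => [|m]; first exact: is_presentation_M0.
split; [exact: Mrels_Mn | exact: Mn_generated | exact: Mn_universal].
Qed.
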